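(* Assume A2 and let $n\ge 1$. Then $$y_{10^{n-1}}<y_{010^{n-1}}<y_{10^n}\qquad\text{and}\qquad y_{01^n}<y_{101^{n-1}}<y_{01^{n-1}},$$ where $0^k$, $1^k$ denote $k$-fold repetitions of a letter and $0^0=1^0=\epsilon$ (so e.g. $y_{10^0}=y_1$).
   Context: Words are finite strings over $\{0,1\}$; $\epsilon$ is the empty word. Let $\mathcal I\subseteq\mathbb R$ be an interval and $\phi_0,\phi_1:\mathcal I\to\mathcal I$. For a word $w$ put $\phi_w:=\phi_{w_{|w|}}\circ\cdots\circ\phi_{w_1}$ (the first letter is applied first), $\phi_\epsilon=\mathrm{id}$. Assumption A2: for all $x<y$ in $\mathcal I$ and $k\in\{0,1\}$, $\phi_k(x)<\phi_k(y)$ and $\phi_k(y)-\phi_k(x)<y-x$; moreover $\phi_0,\phi_1$ have fixed points $y_0,y_1\in\mathcal I$ with $y_1<y_0$. Under A2, for every non-empty word $w$ the map $\phi_w$ has a unique fixed point in $\mathcal I$, denoted $y_w$. *)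

From Stdlib Require Import Reals Lra List ClassicalEpsilon.
Open Scope R_scope.

(* Words over {0,1}: false = letter 0, true = letter 1. *)
Definition word := list bool.

Definition is_interval (I : R -> Prop) : Prop :=
  forall x y z, I x -> I z -> x <= y -> y <= z -> I y.

Definition letter_map (phi0 phi1 : R -> R) (b : bool) : R -> R :=
  if b then phi1 else phi0.

(* phi_w = phi_{w_|w|} o ... o phi_{w_1}: first letter applied first. *)
Definition phiw (phi0 phi1 : R -> R) (w : word) (x : R) : R :=
  fold_left (fun acc b => letter_map phi0 phi1 b acc) w x.

Definition A2 (I : R -> Prop) (phi0 phi1 : R -> R) : Prop :=
  is_interval I /\
  (forall k x, I x -> I (letter_map phi0 phi1 k x)) /\
  (forall k x y, I x -> I y -> x < y ->
      letter_map phi0 phi1 k x < letter_map phi0 phi1 k y /\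
      letter_map phi0 phi1 k y - letter_map phi0 phi1 k x < y - x) /\
  (exists y0 y1, I y0 /\ I y1 /\ phi0 y0 = y0 /\ phi1 y1 = y1 /\ y1 < y0).

(* y_w: the (unique, under A2, for nonempty w) fixed point of phi_w in I. *)
Definition yfix (I : R -> Prop) (phi0 phi1 : R -> R) (w : word) : R :=
  epsilon (inhabits 0) (fun y => I y /\ phiw phi0 phi1 w y = y).

Definition rep (b : bool) (k : nat) : word := repeat b k.

(** Every [phi_w] with [w] nonempty is increasing and strictly shortens distances on [I],
    so it has exactly one fixed point [y_w], and [x < y_w] holds exactly when
    [x < phi_w x]; moreover [phi_w] maps [[y_1, y_0]] into itself.  Write [a = y_{10^m}]
    and [c = y_{010^m}].  Since [phi_1] pushes [y_0] down, [phi_{10^m} y_0 < y_0], hence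
    [a, c < y_0], so [phi_0] moves both [a] and [c] up.  Then
    [phi_{010^m} a = phi_{10^m} (phi_0 a) > a] gives [a < c], and
    [phi_0 c] is a fixed point of [phi_{10^{m+1}}], so [y_{10^{m+1}} = phi_0 c > c].
    The second chain is the first one for the maps [x |-> - phi_{1-k} (- x)] on [-I]. *)
From Stdlib Require Import Reals List.
From Stdlib Require Import Lra Lia ClassicalEpsilon.
Open Scope R_scope.

Definition increasing_on (I : R -> Prop) (F : R -> R) : Prop :=
  forall x y, I x -> I y -> x < y -> F x < F y.

Definition nonexpansive_on (I : R -> Prop) (F : R -> R) : Prop :=
  forall x y, I x -> I y -> x < y -> F y - F x <= y - x.

Definition contractive_on (I : R -> Prop) (F : R -> R) : Prop :=
  forall x y, I x -> I y -> x < y -> F y - F x < y - x.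

Lemma increasing_on_le I F x y :
  increasing_on I F -> I x -> I y -> x <= y -> F x <= F y.
Proof.
  intros hF hx hy [hxy | ->]; [left; now apply hF | right; reflexivity].
Qed.

Section ContractingFixpoint.

Variables (I : R -> Prop) (F : R -> R) (p : R).
Hypotheses (hF : contractive_on I F) (hp : I p) (fixp : F p = p).

Lemma contractive_fixpoint_unique q : I q -> F q = q -> q = p.
Proof.
  intros hq fixq. destruct (Rtotal_order q p) as [h | [h | h]]; auto.
  - specialize (hF q p hq hp h). lra.
  - specialize (hF p q hp hq h). lra.
Qed.

Lemma lt_contractive_fixpoint x : I x -> (x < p <-> x < F x).
Proof.
  intros hx. split; intros h.
  - specialize (hF x p hx hp h). lra.
  - destruct (Rtotal_order x p) as [h' | [-> | h']]; [exact h' | lra |].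
    specialize (hF p x hp hx h'). lra.
Qed.

Lemma gt_contractive_fixpoint x : I x -> (p < x <-> F x < x).
Proof.
  intros hx. split; intros h.
  - specialize (hF p x hp hx h). lra.
  - destruct (Rtotal_order x p) as [h' | [-> | h']]; [| lra | exact h'].
    apply (lt_contractive_fixpoint x hx) in h'. lra.
Qed.

End ContractingFixpoint.

(* Knaster-Tarski on a compact interval: the supremum of [{x | x <= F x}] is fixed. *)
Lemma monotone_self_map_fixpoint (a b : R) (F : R -> R) :
  a <= b ->
  (forall x, a <= x <= b -> a <= F x <= b) ->
  (forall x y, a <= x <= b -> a <= y <= b -> x <= y -> F x <= F y) ->
  exists p, a <= p <= b /\ F p = p.
Proof.
  intros hab hmaps hmono.
  set (E := fun x => a <= x <= b /\ x <= F x).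
  assert (hE_bound : bound E) by (exists b; intros x [hx _]; lra).
  assert (hE_a : E a) by (split; [lra | apply hmaps; lra]).
  destruct (completeness E hE_bound (ex_intro _ a hE_a)) as [s [hub hlub]].
  assert (hs : a <= s <= b).
  { split; [now apply hub | apply hlub; intros x [hx _]; lra]. }
  assert (s_le : s <= F s).
  { apply hlub. intros x [hx hxF].
    pose proof (hmono x s hx hs (hub x (conj hx hxF))). lra. }
  assert (F_le : F s <= s).
  { apply hub. split; [now apply hmaps |]. apply hmono; auto. }
  exists s. split; [exact hs | lra].
Qed.

Lemma phiw_cons phi0 phi1 b w x :
  phiw phi0 phi1 (b :: w) x = phiw phi0 phi1 w (letter_map phi0 phi1 b x).
Proof. reflexivity. Qed.

Lemma phiw_snoc phi0 phi1 w b x :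
  phiw phi0 phi1 (w ++ b :: nil) x = letter_map phi0 phi1 b (phiw phi0 phi1 w x).
Proof. unfold phiw. now rewrite fold_left_app. Qed.

Lemma phiw_rep_fixed phi0 phi1 b k p :
  letter_map phi0 phi1 b p = p -> phiw phi0 phi1 (rep b k) p = p.
Proof.
  intros fixp. induction k as [| k IH]; [reflexivity |].
  simpl rep. now rewrite phiw_cons, fixp.
Qed.

Lemma rep_S_snoc b k : rep b (S k) = rep b k ++ b :: nil.
Proof. unfold rep. induction k as [| k IH]; simpl in *; congruence. Qed.

Lemma map_negb_rep b k : map negb (rep b k) = rep (negb b) k.
Proof. unfold rep. induction k as [| k IH]; simpl; congruence. Qed.

Section AssumptionA2.

Variables (I : R -> Prop) (phi0 phi1 : R -> R).
Hypothesis hA2 : A2 I phi0 phi1.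

Local Notation P := (phiw phi0 phi1).
Local Notation y := (yfix I phi0 phi1).

Lemma letter_map_maps_into b x : I x -> I (letter_map phi0 phi1 b x).
Proof. apply hA2. Qed.

Lemma letter_map_increasing b : increasing_on I (letter_map phi0 phi1 b).
Proof. intros x x' hx hx' h. now apply hA2. Qed.

Lemma letter_map_contractive b : contractive_on I (letter_map phi0 phi1 b).
Proof. intros x x' hx hx' h. now apply hA2. Qed.

Lemma phiw_maps_into w x : I x -> I (P w x).
Proof.
  revert x. induction w as [| b w IH]; intros x hx; [exact hx |].
  rewrite phiw_cons. now apply IH, letter_map_maps_into.
Qed.

Lemma phiw_increasing_nonexpansive w :
  increasing_on I (P w) /\ nonexpansive_on I (P w).
Proof.
  induction w as [| b w [IHinc IHne]].
  - split; intros x x' _ _ h; simpl; lra.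
  - split; intros x x' hx hx' h; rewrite !phiw_cons;
      pose proof (letter_map_increasing b x x' hx hx' h) as hinc;
      pose proof (letter_map_maps_into b x hx) as hbx;
      pose proof (letter_map_maps_into b x' hx') as hbx'.
    + now apply IHinc.
    + pose proof (letter_map_contractive b x x' hx hx' h).
      pose proof (IHne _ _ hbx hbx' hinc). lra.
Qed.

Lemma phiw_increasing w : increasing_on I (P w).
Proof. apply phiw_increasing_nonexpansive. Qed.

Lemma phiw_cons_contractive b w : contractive_on I (P (b :: w)).
Proof.
  intros x x' hx hx' h. rewrite !phiw_cons.
  pose proof (letter_map_increasing b x x' hx hx' h) as hinc.
  pose proof (letter_map_contractive b x x' hx hx' h).
  pose proof (proj2 (phiw_increasing_nonexpansive w) _ _
    (letter_map_maps_into b x hx) (letter_map_maps_into b x' hx') hinc).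
  lra.
Qed.

Lemma phiw_cons_has_fixpoint b w : exists p, I p /\ P (b :: w) p = p.
Proof.
  destruct hA2 as (hI & _ & _ & y0 & y1 & hy0 & hy1 & fix0 & fix1 & y10).
  assert (in_I : forall x, y1 <= x <= y0 -> I x) by (intros x hx; apply (hI y1 x y0); tauto).
  assert (letter_between : forall k x, y1 <= x <= y0 -> y1 <= letter_map phi0 phi1 k x <= y0).
  { intros k x hx.
    pose proof (increasing_on_le _ _ _ _ (letter_map_increasing k) hy1 (in_I x hx) (proj1 hx)).
    pose proof (increasing_on_le _ _ _ _ (letter_map_increasing k) (in_I x hx) hy0 (proj2 hx)).
    pose proof (letter_map_contractive k y1 y0 hy1 hy0 y10).
    destruct k; simpl in *; lra. }
  assert (word_between : forall v x, y1 <= x <= y0 -> y1 <= P v x <= y0).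
  { induction v as [| k v IH]; intros x hx; [exact hx |].
    rewrite phiw_cons. now apply IH, letter_between. }
  destruct (monotone_self_map_fixpoint y1 y0 (P (b :: w))) as [p [hp fixp]].
  - lra.
  - apply word_between.
  - intros x x' hx hx'. apply (increasing_on_le I); auto using phiw_increasing.
  - exists p. auto.
Qed.

Lemma yfix_spec b w : I (y (b :: w)) /\ P (b :: w) (y (b :: w)) = y (b :: w).
Proof. unfold yfix. apply epsilon_spec, phiw_cons_has_fixpoint. Qed.

Lemma yfix_unique b w p : I p -> P (b :: w) p = p -> y (b :: w) = p.
Proof.
  intros hp fixp. destruct (yfix_spec b w) as [hy fixy].
  exact (contractive_fixpoint_unique _ _ _ (phiw_cons_contractive b w) hp fixp _ hy fixy).
Qed.

Lemma lt_yfix b w x : I x -> (x < y (b :: w) <-> x < P (b :: w) x).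
Proof.
  destruct (yfix_spec b w) as [hy fixy].
  exact (lt_contractive_fixpoint _ _ _ (phiw_cons_contractive b w) hy fixy x).
Qed.

Lemma gt_yfix b w x : I x -> (y (b :: w) < x <-> P (b :: w) x < x).
Proof.
  destruct (yfix_spec b w) as [hy fixy].
  exact (gt_contractive_fixpoint _ _ _ (phiw_cons_contractive b w) hy fixy x).
Qed.

Lemma yfix_chain_10 m :
  y (true :: rep false m) < y (false :: true :: rep false m) /\
  y (false :: true :: rep false m) < y (true :: rep false (S m)).
Proof.
  destruct hA2 as (_ & _ & _ & y0 & y1 & hy0 & hy1 & fix0 & fix1 & y10).
  set (w := true :: rep false m).
  destruct (yfix_spec true (rep false m)) as [ha fixa]. fold w in ha, fixa.
  destruct (yfix_spec false w) as [hc fixc].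
  set (a := y w) in *. set (c := y (false :: w)) in *.
  assert (phi0_up : forall x, I x -> x < y0 -> x < phi0 x).
  { intros x hx. exact (proj1 (lt_contractive_fixpoint _ _ _
      (letter_map_contractive false) hy0 fix0 x hx)). }
  assert (phi1_y0 : phi1 y0 < y0).
  { exact (proj1 (gt_contractive_fixpoint _ _ _
      (letter_map_contractive true) hy1 fix1 y0 hy0) y10). }
  assert (w_y0 : P w y0 < y0).
  { unfold w. rewrite phiw_cons. simpl letter_map.
    rewrite <- (phiw_rep_fixed phi0 phi1 false m y0 fix0) at 2.
    apply phiw_increasing; auto. exact (letter_map_maps_into true y0 hy0). }
  assert (a_y0 : a < y0) by (apply (gt_yfix true (rep false m)); auto).
  assert (c_y0 : c < y0).
  { apply (gt_yfix false w); auto. rewrite phiw_cons. simpl. now rewrite fix0. }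
  split.
  - apply (lt_yfix false w); auto.
    rewrite phiw_cons. simpl letter_map. rewrite <- fixa at 1.
    apply phiw_increasing; auto. exact (letter_map_maps_into false a ha).
  - assert (next_fix : y (true :: rep false (S m)) = phi0 c).
    { apply yfix_unique; [exact (letter_map_maps_into false c hc) |].
      rewrite rep_S_snoc.
      change (true :: rep false m ++ false :: nil) with (w ++ false :: nil).
      rewrite phiw_snoc. change (phiw phi0 phi1 w (phi0 c)) with (P (false :: w) c).
      now rewrite fixc. }
    rewrite next_fix. auto.
Qed.

End AssumptionA2.

Definition mirror (phi0 phi1 : R -> R) (b : bool) (x : R) : R :=
  - letter_map phi0 phi1 (negb b) (- x).

Definition mirror_interval (I : R -> Prop) (x : R) : Prop := I (- x).

Lemma letter_map_mirror phi0 phi1 b :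
  letter_map (mirror phi0 phi1 false) (mirror phi0 phi1 true) b = mirror phi0 phi1 b.
Proof. now destruct b. Qed.

Lemma phiw_mirror phi0 phi1 w x :
  phiw (mirror phi0 phi1 false) (mirror phi0 phi1 true) w x
  = - phiw phi0 phi1 (map negb w) (- x).
Proof.
  revert x. induction w as [| b w IH]; intros x; simpl map.
  - unfold phiw; simpl. lra.
  - rewrite !phiw_cons, IH, letter_map_mirror. unfold mirror. now rewrite Ropp_involutive.
Qed.

Lemma A2_mirror I phi0 phi1 :
  A2 I phi0 phi1 ->
  A2 (mirror_interval I) (mirror phi0 phi1 false) (mirror phi0 phi1 true).
Proof.
  intros hA2. pose proof hA2 as (hI & _ & _ & y0 & y1 & hy0 & hy1 & fix0 & fix1 & y10).
  unfold mirror_interval. split; [| split; [| split]].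
  - intros x x' z hx hz h h'. apply (hI (- z) (- x') (- x)); auto; lra.
  - intros k x hx. rewrite letter_map_mirror. unfold mirror.
    rewrite Ropp_involutive. now apply letter_map_maps_into.
  - intros k x x' hx hx' h. rewrite !letter_map_mirror. unfold mirror.
    assert (h' : - x' < - x) by lra.
    pose proof (letter_map_increasing I phi0 phi1 hA2 (negb k) _ _ hx' hx h').
    pose proof (letter_map_contractive I phi0 phi1 hA2 (negb k) _ _ hx' hx h').
    split; lra.
  - exists (- y1), (- y0). unfold mirror; simpl.
    rewrite !Ropp_involutive, fix0, fix1. repeat split; auto; lra.
Qed.

Lemma yfix_mirror I phi0 phi1 b w :
  A2 I phi0 phi1 ->
  yfix (mirror_interval I) (mirror phi0 phi1 false) (mirror phi0 phi1 true) (b :: w)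
  = - yfix I phi0 phi1 (negb b :: map negb w).
Proof.
  intros hA2. destruct (yfix_spec I phi0 phi1 hA2 (negb b) (map negb w)) as [hy fixy].
  apply (yfix_unique _ _ _ (A2_mirror I phi0 phi1 hA2)).
  - unfold mirror_interval. now rewrite Ropp_involutive.
  - rewrite phiw_mirror, Ropp_involutive. simpl map. now rewrite fixy.
Qed.

Theorem mainTheorem5 (I : R -> Prop) (phi0 phi1 : R -> R) (n : nat)
  (hA2 : A2 I phi0 phi1) (hn : (1 <= n)%nat) :
  let y := yfix I phi0 phi1 in
  (y (true :: rep false (n - 1)) < y (false :: true :: rep false (n - 1)) /\
   y (false :: true :: rep false (n - 1)) < y (true :: rep false n)) /\
  (y (false :: rep true n) < y (true :: false :: rep true (n - 1)) /\
   y (true :: false :: rep true (n - 1)) < y (false :: rep true (n - 1))).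
Proof.
  intros y. destruct n as [| m]; [lia |]. replace (S m - 1)%nat with m by lia.
  split; [exact (yfix_chain_10 I phi0 phi1 hA2 m) |].
  pose proof (yfix_chain_10 _ _ _ (A2_mirror I phi0 phi1 hA2) m) as chain.
  rewrite !yfix_mirror in chain by exact hA2.
  cbn [map] in chain. rewrite !map_negb_rep in chain. cbn [negb] in chain.
  unfold y. lra.
Qed.
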